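(* For all $n,k\ge 0$, in $\mathbb{Z}[q]$, $$e(n,k)+o(n,k)\,q\equiv q^{\binom{k+1}{2}}\begin{bmatrix} n\\ k\end{bmatrix}_q \pmod{q^2-1},\qquad L(n,k)+\bar L(n,k)\,q\equiv \begin{bmatrix} n\\ k\end{bmatrix}_q\pmod{q^2-1}.$$
   Context: $e(n,k)$ (resp. $o(n,k)$) is the number of $k$-element subsets of $\{1,\dots,n\}$ with even (resp. odd) sum of elements, the empty set counting as even. $\begin{bmatrix} n\\ k\end{bmatrix}_q=\prod_{i=1}^{k}\frac{1-q^{n-k+i}}{1-q^i}$ is the Gaussian ($q$-)binomial coefficient (a polynomial in $q$, zero for $k>n$). Losanitsch's triangle $(L(n,k))$ is defined by $L(0,k)=[k=0]$, $L(1,k)=[k\le 1]$ for $k\ge0$, $L(n,k)=0$ for $k<0$, and for $n\ge 2$: $L(n,k)=L(n-2,k)+\binom{n-2}{k-1}+L(n-2,k-2)$ (with $\binom{m}{j}=0$ for $j<0$ or $j>m$). $\bar L(n,k)=\binom{n}{k}-L(n,k)$. *)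

From mathcomp Require Import all_boot all_order all_algebra.
Set Implicit Arguments. Unset Strict Implicit. Unset Printing Implicit Defensive.
Import GRing.Theory.
Local Open Scope ring_scope.

(* e(n,k): number of k-subsets of {1,...,n} with even element sum.
   Elements i : 'I_n represent the integer i+1. *)
Definition e_sub (n k : nat) : nat :=
  #|[set A : {set 'I_n} | (#|A| == k) && ~~ odd (\sum_(i in A) i.+1)%N]|.
Definition o_sub (n k : nat) : nat :=
  #|[set A : {set 'I_n} | (#|A| == k) && odd (\sum_(i in A) i.+1)%N]|.

Definition qbin (n k : nat) : {poly int} :=
  if (k <= n)%N then
    (\prod_(i < k) (1 - 'X^(n - k + i.+1))) %/ (\prod_(i < k) (1 - 'X^(i.+1)))
  else 0.

Fixpoint Los (n k : nat) {struct n} : nat :=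
  match n with
  | 0 => (k == 0%N)
  | 1 => (k <= 1)%N
  | n'.+2 => (Los n' k + (if k is k'.+1 then 'C(n', k') else 0)
              + (if k is k'.+2 then Los n' k' else 0))%N
  end.

Definition Losbar (n k : nat) : int := ('C(n, k))%:Z - (Los n k)%:Z.

Definition poly_congr (p r m : {poly int}) : Prop := exists s : {poly int}, p - r = s * m.

(* Both congruences are equalities of values at the two roots q = 1 and q = -1
   of q^2 - 1.  The Gaussian binomial obeys the q-Pascal recursion
   [n+1, k+1] = [n, k] + q^(k+1) [n, k+1].  Splitting the k-subsets of
   {1, ..., n+1} according to whether they contain 1, and shifting the rest
   down by one, shows that sum_(|A| = k) q^(sum A) satisfies the same recursion
   once divided by q^C(k+1, 2); at q = +-1 this sum is e(n, k) +- o(n, k).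
   At q = 1 the Gaussian binomial is C(n, k); at q = -1 applying q-Pascal twice
   gives [n+2, k+2] = [n, k+2] + [n, k], Losanitsch's recursion up to the
   binomial term, whence 2 L(n, k) = C(n, k) + [n, k] at q = -1. *)

From mathcomp Require Import all_boot all_order all_algebra.
From mathcomp Require Import ring zify.

Set Implicit Arguments.
Unset Strict Implicit.
Unset Printing Implicit Defensive.
Import GRing.Theory.
Local Open Scope ring_scope.

Lemma poly_congr_sqr1 (p r : {poly int}) :
  (forall x : int, x ^+ 2 = 1 -> p.[x] = r.[x]) -> poly_congr p r ('X^2 - 1).
Proof.
move=> eq_pr.
have /factor_theorem [q Dq] : root (p - r) 1.
  by rewrite rootE hornerD hornerN eq_pr ?expr1n ?subrr.
have /factor_theorem [s Dqs] : root q (-1).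
  have : (p - r).[-1] = 0 by rewrite hornerD hornerN eq_pr ?sqrrN ?expr1n ?subrr.
  by rewrite Dq hornerM !hornerE => /eqP; rewrite mulf_eq0 rootE => /orP[].
exists s; rewrite Dq Dqs -mulrA polyCN opprK; ring.
Qed.

Fixpoint qbinom (n k : nat) {struct n} : {poly int} :=
  match n, k with
  | 0, k => (k == 0%N)%:R
  | n.+1, 0 => 1
  | n.+1, k.+1 => qbinom n k + 'X^(k.+1) * qbinom n k.+1
  end.

Definition qpoch (m : nat) : {poly int} := \prod_(i < m) (1 - 'X^(i.+1)).

Lemma qbinom0 n : qbinom n 0 = 1.
Proof. by case: n. Qed.

Lemma qbinom_small n k : (n < k)%N -> qbinom n k = 0.
Proof.
elim: n k => [|n IHn] [|k] //= ltnk.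
by rewrite !IHn ?mulr0 ?addr0 // ltnW.
Qed.

Lemma qpochS m : qpoch m.+1 = qpoch m * (1 - 'X^(m.+1)).
Proof. by rewrite /qpoch big_ord_recr. Qed.

Lemma qpochD m k :
  qpoch (m + k) = qpoch m * \prod_(i < k) (1 - 'X^(m + i.+1)).
Proof.
by rewrite /qpoch big_split_ord; congr (_ * _); apply: eq_bigr => i _; rewrite /= addnS.
Qed.

Lemma lead_coef_qpoch m : lead_coef (qpoch m) = (-1) ^+ m.
Proof.
rewrite lead_coef_prod (eq_bigr (fun _ => -1)) ?prodr_const ?card_ord // => i _.
by rewrite -opprB lead_coefN lead_coefXnsubC.
Qed.

Lemma qpoch_neq0 m : qpoch m != 0.
Proof. by rewrite -lead_coef_eq0 lead_coef_qpoch signr_eq0. Qed.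

Lemma qbinom_qpoch n k :
  (k <= n)%N -> qbinom n k * qpoch k * qpoch (n - k) = qpoch n.
Proof.
elim: n k => [|n IHn] [|k] //= lekn.
- by rewrite /qpoch big_ord0 !mul1r.
- by rewrite subn0 /qpoch big_ord0 !mul1r.
rewrite subSS qpochS (qpochS n).
have [-> | neqkn] := eqVneq k n.
  by rewrite (@qbinom_small n n.+1) // mulr0 addr0 -[in RHS](IHn n) // subnn; ring.
have ltkn : (k < n)%N by rewrite ltn_neqAle neqkn.
have := IHn k.+1 ltkn; have := IHn k lekn.
have -> : (n - k = (n - k.+1).+1)%N by lia.
rewrite !qpochS => Ek Ek1.
have -> : qpoch n * (1 - 'X^(n.+1)) = qpoch n * (1 - 'X^(k.+1))
    + 'X^(k.+1) * qpoch n * (1 - 'X^((n - k.+1).+1)).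
  have -> : (n.+1 = k.+1 + (n - k.+1).+1)%N by lia.
  by rewrite exprD; ring.
by rewrite -{1}Ek -Ek1; ring.
Qed.

Lemma qbin_qbinom n k : qbin n k = qbinom n k.
Proof.
rewrite /qbin; case: leqP => [lekn | ltnk]; last by rewrite qbinom_small.
have -> : \prod_(i < k) (1 - 'X^(n - k + i.+1)) = qbinom n k * qpoch k.
  apply: (mulIf (qpoch_neq0 (n - k))).
  by rewrite mulrC -qpochD subnK // qbinom_qpoch.
by rewrite Pdiv.IdomainUnit.mulpK // lead_coef_qpoch unitrX // unitrN1.
Qed.

Lemma horner1_qbinom n k : (qbinom n k).[1] = 'C(n, k)%:Z.
Proof.
elim: n k => [|n IHn] [|k] /=; rewrite ?hornerC ?qbinom0 ?hornerC //.
by rewrite hornerD hornerM hornerXn expr1n mul1r !IHn binS PoszD addrC.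
Qed.

Lemma hornerN1_qbinomSS n k :
  (qbinom n.+2 k).[-1] =
    (qbinom n k).[-1] + (if k is k'.+2 then (qbinom n k').[-1] else 0).
Proof.
case: k => [|[|k]] /=; rewrite ?qbinom0 ?addr0 // !hornerE; first by ring.
rewrite !exprS.
transitivity ((qbinom n k).[-1] + (-1) ^+ k ^+ 2 * (qbinom n k.+2).[-1]); first by ring.
by rewrite sqrr_sign mul1r addrC.
Qed.

Definition ssum {n} (A : {set 'I_n}) : nat := (\sum_(i in A) i.+1)%N.

Definition subset_sum_gf (n k : nat) : {poly int} :=
  \sum_(A : {set 'I_n} | #|A| == k) 'X^(ssum A).

Lemma expr_odd_sqr1 (R : pzRingType) (x : R) m : x ^+ 2 = 1 -> x ^+ m = x ^+ odd m.
Proof.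
by move=> x2; rewrite -{1}(odd_double_half m) exprD -mul2n exprM x2 expr1n mulr1.
Qed.

Lemma horner_subset_sum_gf (n k : nat) (x : int) :
  x ^+ 2 = 1 -> (subset_sum_gf n k).[x] = (e_sub n k)%:Z + (o_sub n k)%:Z * x.
Proof.
move=> x2; rewrite horner_sum (bigID (fun A => odd (ssum A))) /= addrC.
congr (_ + _).
- rewrite (eq_bigr (fun=> 1)) => [|A /andP[_ /negbTE even]]; last first.
    by rewrite hornerXn (expr_odd_sqr1 _ x2) even.
  by rewrite sumr_const /e_sub cardsE natz.
- rewrite (eq_bigr (fun=> x)) => [|A /andP[_ odd_A]]; last first.
    by rewrite hornerXn (expr_odd_sqr1 _ x2) odd_A.
  by rewrite sumr_const /o_sub cardsE -mulr_natl natz.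
Qed.

Section SubsetsOfOrdS.
Variable n : nat.

Definition shift_set (B : {set 'I_n}) : {set 'I_n.+1} := [set lift ord0 i | i in B].

Definition set_cons (Bb : {set 'I_n} * bool) : {set 'I_n.+1} :=
  if Bb.2 then ord0 |: shift_set Bb.1 else shift_set Bb.1.

Definition set_uncons (A : {set 'I_n.+1}) : {set 'I_n} * bool :=
  ([set i | lift ord0 i \in A], ord0 \in A).

Lemma mem_shift_set B i : (lift ord0 i \in shift_set B) = (i \in B).
Proof. exact/mem_imset/lift_inj. Qed.

Lemma ord0_shift_set B : ord0 \notin shift_set B.
Proof. by apply/imsetP => -[i _ /eqP]; rewrite eq_liftF. Qed.

Lemma set_consK : cancel set_cons set_uncons.
Proof.
move=> [B b]; rewrite /set_uncons /set_cons; congr pair.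
  by apply/setP => i; rewrite inE; case: b => /=; rewrite ?inE ?lift_eqF mem_shift_set.
by case: b => /=; rewrite ?setU11 // (negbTE (ord0_shift_set B)).
Qed.

Lemma set_unconsK : cancel set_uncons set_cons.
Proof.
move=> A; apply/setP => x; rewrite /set_cons /set_uncons /=.
case: (unliftP ord0 x) => [i -> | ->].
  by case: ifP; rewrite ?inE ?lift_eqF mem_shift_set inE.
by case: ifP; rewrite ?setU11 // (negbTE (ord0_shift_set _)).
Qed.

Lemma sum_subsetsS (R : nmodType) (F : {set 'I_n.+1} -> R) :
  \sum_(A : {set 'I_n.+1}) F A =
  \sum_(B : {set 'I_n}) (F (ord0 |: shift_set B) + F (shift_set B)).
Proof.
rewrite (reindex set_cons) /=; last first.
  by exists set_uncons => ? _; [apply: set_consK | apply: set_unconsK].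
rewrite -(pair_big xpredT xpredT (fun B b => F (set_cons (B, b)))) /=.
by apply: eq_bigr => B _; rewrite big_bool.
Qed.

Lemma card_shift_set B : #|shift_set B| = #|B|.
Proof. exact/card_imset/lift_inj. Qed.

Lemma ssum_shift_set B : ssum (shift_set B) = (ssum B + #|B|)%N.
Proof.
rewrite /ssum big_imset /=; last by move=> i j _ _; apply: lift_inj.
rewrite -sum1_card -big_split /=; apply: eq_bigr => i _.
by rewrite /bump add1n addn1.
Qed.

End SubsetsOfOrdS.

Lemma subset_sum_gf0 n : subset_sum_gf n 0 = 1.
Proof.
rewrite /subset_sum_gf (big_pred1 set0) => [|A]; last by rewrite cards_eq0.
by rewrite /ssum big_set0.
Qed.

Lemma subset_sum_gf_ord0 k : subset_sum_gf 0 k.+1 = 0.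
Proof.
rewrite /subset_sum_gf big_pred0 // => A.
by apply/negbTE; rewrite neq_ltn (leq_ltn_trans (max_card _)) ?card_ord.
Qed.

Lemma subset_sum_gfS n k :
  subset_sum_gf n.+1 k.+1 = 'X^(k.+1) * (subset_sum_gf n k + subset_sum_gf n k.+1).
Proof.
rewrite /subset_sum_gf big_mkcond sum_subsetsS big_split mulrDr !mulr_sumr.
congr (_ + _); rewrite [RHS]big_mkcond; apply: eq_bigr => B _.
  rewrite cardsU1 (negPf (ord0_shift_set B)) card_shift_set eqSS.
  case: eqP => [<-|]; rewrite ?mulr0 //.
  rewrite /ssum big_setU1 ?ord0_shift_set //= -/(ssum _) ssum_shift_set.
  by rewrite -exprD -/(ssum B) add1n addSn addnC.
rewrite card_shift_set ssum_shift_set.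
by case: eqP => [->|]; rewrite ?mulr0 // -exprD addnC.
Qed.

Lemma subset_sum_gf_qbinom n k :
  subset_sum_gf n k = 'X^('C(k.+1, 2)) * qbinom n k.
Proof.
elim: n k => [|n IHn] [|k]; rewrite ?subset_sum_gf0 ?qbinom0 ?mulr1 //.
  by rewrite subset_sum_gf_ord0 /= mulr0.
by rewrite subset_sum_gfS !IHn /= (binS k.+1 1) bin1 exprD; ring.
Qed.

Lemma Los_double n k : (Los n k)%:Z *+ 2 = 'C(n, k)%:Z + (qbinom n k).[-1].
Proof.
elim/ltn_ind: n k => -[|[|n]] IHn k.
- by case: k => [|k] /=; rewrite hornerC.
- by case: k => [|[|k]] /=; rewrite !hornerE.
have {}IHn := IHn n (ltnW (ltnSn _)).
rewrite /= hornerN1_qbinomSS.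
case: k => [|[|k]]; rewrite ?bin0 ?bin1 ?binS.
- have := IHn 0%N; rewrite bin0; lia.
- have := IHn 1%N; rewrite bin1; lia.
- have := IHn k; have := IHn k.+2; lia.
Qed.

Theorem theorem4p1 (n k : nat) :
  poly_congr ((e_sub n k)%:Z%:P + (o_sub n k)%:Z%:P * 'X)
             ('X^('C(k.+1, 2)) * qbin n k) ('X^2 - 1)
  /\
  poly_congr ((Los n k)%:Z%:P + (Losbar n k)%:P * 'X)
             (qbin n k) ('X^2 - 1).
Proof.
rewrite qbin_qbinom; split; apply: poly_congr_sqr1 => x x2.
  by rewrite -subset_sum_gf_qbinom horner_subset_sum_gf // !hornerE.
rewrite !hornerE /Losbar.
have /orP[] : (x == 1) || (x == -1) by rewrite -sqrf_eq1 x2.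
  by move/eqP->; rewrite horner1_qbinom mulr1 addrC subrK.
by move/eqP->; apply: (addrI 'C(n, k)%:Z); rewrite -Los_double mulr2n; ring.
Qed.
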